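(* Let $X$, $Y$ be real Banach spaces, $\Omega$ a measure space, $Z:=L^2(\Omega)$, and $e:Y\to Z$ a linear continuous dense embedding. Let $f:X\to\mathbb{R}$ and $g:X\to Y$ be continuously Fréchet differentiable, and assume that $y\mapsto|y|$ is well-defined and continuous on $Y$. Let $(x^k)$ be generated by the augmented Lagrangian algorithm described in the context, where in Step 2 the iterate $x^{k+1}$ is chosen such that $L_{\rho_k}'(x^{k+1},w^k)\to 0$ in $X^*$, and assume $\rho_k\to\infty$. Then every (strong) limit point $\bar x$ of $(x^k)$ which is feasible ($g(\bar x)\le 0$) satisfies the AKKT conditions: there exist sequences $y^k\to\bar x$ in $X$ and $(\mu^k)\subset K_Y^+$ with $f'(y^k)+g'(y^k)^*\mu^k\to 0$ and $\langle\mu^k,g_-(y^k)\rangle\to 0$.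
   Context: The order on $Y$ is induced by $Z$: $K_Y:=\{y\in Y:e(y)\ge 0\text{ a.e.}\}$, $y\le 0$ means $-y\in K_Y$; $K_Y^+:=\{\mu\in Y^*:\langle\mu,y\rangle\ge 0\ \forall y\in K_Y\}$, with $\langle\cdot,\cdot\rangle$ the duality pairing of $Y^*$ and $Y$; $Z\cong Z^*$ is regarded as a subspace of $Y^*$ via $e^*$. For $z\in Z$, $z_+:=\max\{z,0\}$, $z_-:=\max\{-z,0\}$ pointwise; $|y|, y_\pm$ for $y\in Y$ are defined via these pointwise operations (''well-defined on $Y$'' means they land in $Y$); $g_-(x):=(g(x))_-$. The augmented Lagrangian is $L_\rho(x,\lambda):=f(x)+\frac{\rho}{2}\|(g(x)+\lambda/\rho)_+\|_Z^2$, with $x$-derivative $f'(x)+g'(x)^*(\lambda+\rho g(x))_+$. Algorithm: (S.0) Choose $(x^0,\lambda^0)\in X\times Z$, $\rho_0>0$, $w^{\max}\in Z$ with $w^{\max}\ge 0$, $\gamma>1$, $\tau\in(0,1)$; $k=0$. (S.2) Choose $w^k\in Z$ with $0\le w^k\le w^{\max}$ a.e. and compute an approximate minimizer $x^{k+1}$ of $L_{\rho_k}(\cdot,w^k)$. (S.3) Set $\lambda^{k+1}:=(w^k+\rho_k g(x^{k+1}))_+$. If $k=0$ or $\|\min\{-g(x^{k+1}),w^k/\rho_k\}\|_Z\le\tau\|\min\{-g(x^k),w^{k-1}/\rho_{k-1}\}\|_Z$ (pointwise min), set $\rho_{k+1}:=\rho_k$; else $\rho_{k+1}:=\gamma\rho_k$.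 (S.4) $k\leftarrow k+1$, go to (S.2). The algorithm is run without stopping. *)

From HB Require Import structures.
From mathcomp Require Import all_boot all_order all_algebra.
From mathcomp Require Import all_classical all_reals all_analysis.
Set Implicit Arguments. Unset Strict Implicit. Unset Printing Implicit Defensive.
Import Order.TTheory GRing.Theory Num.Theory.
Import numFieldNormedType.Exports.
Local Open Scope classical_set_scope.
Local Open Scope ring_scope.

(* Elements of Z = L^2(Omega) are represented by measurable real functions with
   finite L^2 norm; all (in)equalities in Z are understood mu-a.e. *)
Definition L2 d (T : measurableType d) (R : realType)
  (mu : {measure set T -> \bar R}) (z : T -> R) : Prop :=
  measurable_fun setT z /\ finite_norm mu 2%:E z.

Definition nrm2 d (T : measurableType d) (R : realType)
  (mu : {measure set T -> \bar R}) (z : T -> R) : \bar R :=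
  Lnorm mu 2%:E (EFin \o z).

Definition ipZ d (T : measurableType d) (R : realType)
  (mu : {measure set T -> \bar R}) (z1 z2 : T -> R) : R :=
  fine (\int[mu]_t (z1 t * z2 t)%:E)%E.

Definition pos_part (T : Type) (R : realType) (z : T -> R) : T -> R :=
  fun t => Num.max (z t) 0.

Definition C1_map (R : realType) (V W : normedModType R) (F : V -> W) : Prop :=
  (forall x, differentiable F x) /\
  (forall (x : V) (eps : R), 0 < eps -> exists2 del : R, 0 < del &
     forall x' : V, `|x' - x| < del -> forall h : V, `|'d F x' h - 'd F x h| <= eps * `|h|).

(* a sequence of functionals phi_k on V converges to 0 in the dual norm of V^* *)
Definition dual_cvg0 (R : realType) (V : normedModType R) (phi : nat -> V -> R) : Prop :=
  forall eps : R, 0 < eps -> \forall k \near \oo, forall h : V, `|phi k h| <= eps * `|h|.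

Definition dual_elt (R : realType) (V : normedModType R) (m : V -> R) : Prop :=
  (forall (a : R) (u v : V), m (a *: u + v) = a * m u + m v) /\ continuous m.

(* Along the given subsequence take y^k := x^(j_k + 1) and, as multiplier, the
   Step 3 update mu^k := (w^(j_k) + rho_(j_k) e g(y^k))_+, acting on Y through
   v |-> (mu^k, e v)_Z.  Stationarity along y^k is then the Step 2 hypothesis.
   For complementarity, e (g_-(y)) = (- e g(y))_+ a.e., and pointwise
   (w + rho G)_+ (-G)_+ <= w^2 / (4 rho) <= w_max^2 / rho, so
   <mu^k, g_-(y^k)> <= ||w_max||^2 / rho_(j_k) -> 0 since the safeguarded
   multiplier estimates w^k stay bounded. *)

From HB Require Import structures.
From mathcomp Require Import all_boot all_order all_algebra.
From mathcomp Require Import all_classical all_reals all_analysis.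
From mathcomp Require Import ring lra.
Set Implicit Arguments.
Unset Strict Implicit.
Unset Printing Implicit Defensive.

Import Order.TTheory GRing.Theory Num.Theory.
Import numFieldNormedType.Exports.
Local Open Scope classical_set_scope.
Local Open Scope ring_scope.

Lemma pos_partD_mul_neg_le (R : realFieldType) (w W r G : R) :
  0 <= w <= W -> 0 < r -> Num.max (w + r * G) 0 * Num.max (- G) 0 <= r^-1 * W ^+ 2.
Proof.
move=> /andP[w0 wW] r0.
have [G0|G0] := leP 0 G.
  by rewrite (max_idPr (_ : - G <= 0)) ?oppr_le0 // mulr0 mulr_ge0 ?invr_ge0 ?sqr_ge0 ?ltW.
have [wG0|wG0] := leP (w + r * G) 0; first by rewrite mul0r mulr_ge0 ?invr_ge0 ?sqr_ge0 ?ltW.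
rewrite (max_idPl (_ : 0 <= - G)); last by rewrite oppr_ge0 ltW.
rewrite ler_pdivlMl //.
(* r (w + r G) (- G) = (w ^+ 2 - (w + 2 r G) ^+ 2) / 4 *)
have : 0 <= (w + 2 * r * G) ^+ 2 by exact: sqr_ge0.
have : w ^+ 2 <= W ^+ 2 by rewrite ler_sqr ?nnegrE ?(le_trans w0).
nra.
Qed.

Section L2_space.
Variables (R : realType) (d : measure_display) (T : measurableType d).
Variable mu : {measure set T -> \bar R}.
Implicit Types (a b c z : T -> R).

Lemma L2_Lfun z : L2 mu z <-> z \in Lfun mu 2%:E.
Proof.
split; first by case=> mz fz; rewrite inE; apply/andP; split; rewrite inE.
by rewrite inE => /andP[]; rewrite !inE.
Qed.

Lemma L2_integrable_mul a b : L2 mu a -> L2 mu b ->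
  mu.-integrable setT (fun t => (a t * b t)%:E).
Proof.
by move=> /L2_Lfun ha /L2_Lfun hb; have /Lfun1_integrable := Lfun2_mul_Lfun1 ha hb.
Qed.

Lemma L2D a b : L2 mu a -> L2 mu b -> L2 mu (fun t => a t + b t).
Proof.
move=> /L2_Lfun ha /L2_Lfun hb; apply/L2_Lfun.
have [_ /(_ 1 a b ha hb)] := @Lfun_submod_closed _ _ _ mu _ (lee1n 2).
by rewrite scale1r.
Qed.

Lemma L2Z r a : L2 mu a -> L2 mu (fun t => r * a t).
Proof.
move=> /L2_Lfun ha; apply/L2_Lfun.
have -> : (fun t => r * a t) = r \o* a by apply/funext => t /=; rewrite mulrC.
by apply: Lfun_scale => //; rewrite ler1n.
Qed.

Lemma L2N a : L2 mu a -> L2 mu (fun t => - a t).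
Proof.
by move=> /(L2Z (-1)); under eq_fun => t do rewrite mulN1r.
Qed.

Lemma L2_norm a : L2 mu a -> L2 mu (fun t => `|a t|).
Proof.
case=> ma fa; split; first exact: measurableT_comp.
rewrite /finite_norm.
under [X in (Lnorm _ _ X < _)%E]eq_fun => t do rewrite /= -abse_EFin.
by rewrite (Lnorm_abse mu (EFin \o a)).
Qed.

Lemma pos_part_ge0 a t : 0 <= pos_part a t.
Proof. by rewrite /pos_part le_max lexx orbT. Qed.

Lemma L2_pos_part a : L2 mu a -> L2 mu (pos_part a).
Proof.
move=> ha.
have -> : pos_part a = (fun t => 2^-1 * (a t + `|a t|)).
  apply/funext => t; rewrite /pos_part.
  by case: (leP 0 (a t)) => h; [rewrite ger0_norm //; field | rewrite ltr0_norm // subrr mulr0].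
by apply/L2Z/L2D/L2_norm.
Qed.

Lemma L2_nrm2_fin a : L2 mu a -> nrm2 mu a = (fine (nrm2 mu a))%:E.
Proof. by case=> _ fa; rewrite fineK // ge0_fin_numE //; exact: Lnorm_ge0. Qed.

Lemma ipZ_linr r a b c : L2 mu a -> L2 mu b -> L2 mu c ->
  ipZ mu a (fun t => r * b t + c t) = r * ipZ mu a b + ipZ mu a c.
Proof.
move=> ha hb hc; rewrite /ipZ.
have iab := L2_integrable_mul ha hb; have iac := L2_integrable_mul ha hc.
under eq_integral => t _ do rewrite mulrDr mulrCA EFinD EFinM.
rewrite integralD //; last exact: integrableZl.
rewrite integralZl // fineD ?fin_numM ?integrable_fin_num //.
by rewrite fineM // integrable_fin_num.
Qed.

Lemma ipZZr r a b : L2 mu a -> L2 mu b ->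
  ipZ mu a (fun t => r * b t) = r * ipZ mu a b.
Proof.
move=> ha hb; rewrite /ipZ.
have iab := L2_integrable_mul ha hb.
under eq_integral => t _ do rewrite mulrCA EFinM.
by rewrite integralZl // fineM // integrable_fin_num.
Qed.

Lemma ipZ_ae_eqr a b b' : L2 mu a -> L2 mu b -> L2 mu b' ->
  {ae mu, forall t, b t = b' t} -> ipZ mu a b = ipZ mu a b'.
Proof.
move=> ha hb hb' hbb'; rewrite /ipZ; congr fine.
apply: ae_eq_integral => //.
- exact: measurable_int (L2_integrable_mul ha hb).
- exact: measurable_int (L2_integrable_mul ha hb').
- by apply: filterS hbb' => t /= ->.
Qed.

Lemma ipZ_ge0 a b : (forall t, 0 <= a t * b t) -> 0 <= ipZ mu a b.
Proof.
by move=> ab0; apply/fine_ge0/integral_ge0 => t _; rewrite lee_fin.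
Qed.

Lemma ipZ_le a b c c' : L2 mu a -> L2 mu b -> L2 mu c -> L2 mu c' ->
  (forall t, 0 <= a t * b t) -> (forall t, 0 <= c t * c' t) ->
  {ae mu, forall t, a t * b t <= c t * c' t} -> ipZ mu a b <= ipZ mu c c'.
Proof.
move=> ha hb hc hc' ab0 cc0 le_ab_cc; rewrite /ipZ.
have iab := L2_integrable_mul ha hb; have icc := L2_integrable_mul hc hc'.
apply: fine_le; rewrite ?integrable_fin_num //.
apply: ae_ge0_le_integral => //.
- by move=> t _; rewrite lee_fin.
- exact: measurable_int iab.
- by move=> t _; rewrite lee_fin.
- exact: measurable_int icc.
- by apply: filterS le_ab_cc => t h _; rewrite lee_fin.
Qed.

Lemma normr_ipZ_le a b : L2 mu a -> L2 mu b ->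
  (`|ipZ mu a b|%:E <= nrm2 mu a * nrm2 mu b)%E.
Proof.
move=> ha hb; have iab := L2_integrable_mul ha hb.
rewrite /ipZ -abse_EFin fineK ?integrable_fin_num //.
apply: le_trans; first exact: le_abse_integral (measurable_int _ iab).
rewrite -Lnorm1; apply: (@hoelder _ _ _ mu a b 2 2) => //; try exact: ha.1; try exact: hb.1.
by rewrite -div1r -splitr.
Qed.

Lemma ipZ_ge0_ae a b : (forall t, 0 <= a t) -> L2 mu a -> L2 mu b ->
  {ae mu, forall t, 0 <= b t} -> 0 <= ipZ mu a b.
Proof.
move=> a0 ha hb b0; rewrite (ipZ_ae_eqr ha hb (L2_pos_part hb)).
  by apply: ipZ_ge0 => t; rewrite mulr_ge0 // pos_part_ge0.
by apply: filterS b0 => t /max_idPl.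
Qed.

Lemma ipZ_pos_part_compl_le r w W G : 0 < r -> L2 mu w -> L2 mu W -> L2 mu G ->
  {ae mu, forall t, 0 <= w t <= W t} ->
  0 <= ipZ mu (pos_part (fun t => w t + r * G t)) (pos_part (fun t => - G t))
    <= r^-1 * ipZ mu W W.
Proof.
move=> r0 hw hW hG wW.
have hl := L2_pos_part (L2D hw (L2Z r hG)).
have hG' := L2_pos_part (L2N hG).
apply/andP; split; first by apply: ipZ_ge0 => t; rewrite mulr_ge0 ?pos_part_ge0.
rewrite -ipZZr //; apply: ipZ_le => //.
- exact: L2Z.
- by move=> t; rewrite mulr_ge0 ?pos_part_ge0.
- by move=> t; rewrite mulrCA -expr2 mulr_ge0 ?invr_ge0 ?sqr_ge0 ?ltW.
- apply: filterS wW => t wWt; rewrite mulrCA -expr2.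
  exact: pos_partD_mul_neg_le.
Qed.

End L2_space.

Section ae_linear_embedding.
Variables (R : realType) (Y : normedModType R) (d : measure_display) (T : measurableType d).
Variables (mu : {measure set T -> \bar R}) (e : Y -> T -> R).
Hypothesis e_L2 : forall y, L2 mu (e y).
Hypothesis e_lin : forall (a : R) (y1 y2 : Y),
  {ae mu, forall t, e (a *: y1 + y2) t = a * e y1 t + e y2 t}.

Lemma embed0 : {ae mu, forall t, e 0 t = 0}.
Proof.
by apply: filterS (e_lin 1 0 0) => t; rewrite scaler0 addr0 mul1r; lra.
Qed.

Lemma embedZ a y : {ae mu, forall t, e (a *: y) t = a * e y t}.
Proof.
apply: filterS2 (e_lin a y 0) embed0 => t.
by rewrite addr0 => -> ->; rewrite addr0.
Qed.

Lemma embedB y1 y2 : {ae mu, forall t, e (y1 - y2) t = e y1 t - e y2 t}.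
Proof.
apply: filterS2 (e_lin 1 y1 (- y2)) (embedZ (-1) y2) => t.
by rewrite scale1r scaleN1r mul1r mulN1r => -> ->.
Qed.

Lemma embed_half_abs_sub (absY : Y -> Y) y :
  {ae mu, forall t, e (absY y) t = `|e y t|} ->
  {ae mu, forall t, e (2^-1 *: (absY y - y)) t = Num.max (- e y t) 0}.
Proof.
move=> habs; apply: filterS3 (embedZ 2^-1 (absY y - y)) (embedB (absY y) y) habs.
move=> t -> -> ->.
have [ey0|ey0] := leP 0 (e y t).
  by rewrite ger0_norm // (max_idPr _) ?oppr_le0 // subrr mulr0.
by rewrite ltr0_norm // (max_idPl _) ?oppr_ge0 ?ltW //; field.
Qed.

Lemma embed_dual_elt a :
  (exists2 C : R, 0 <= C & forall y, (nrm2 mu (e y) <= (C * `|y|)%:E)%E) ->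
  L2 mu a -> dual_elt (fun v => ipZ mu a (e v)).
Proof.
move=> [C C0 e_bnd] ha.
have lin r u v : ipZ mu a (e (r *: u + v)) = r * ipZ mu a (e u) + ipZ mu a (e v).
  rewrite (ipZ_ae_eqr ha (e_L2 _) _ (e_lin r u v)) ?ipZ_linr //.
  exact/L2D/e_L2/L2Z.
split => // v.
pose K := fine (nrm2 mu a) * C.
have K0 : 0 <= K by rewrite mulr_ge0 // fine_ge0 // Lnorm_ge0.
have bnd u : `|ipZ mu a (e u)| <= K * `|u|.
  rewrite -lee_fin (le_trans (normr_ipZ_le ha (e_L2 u))) //.
  rewrite (L2_nrm2_fin ha) /K -mulrA EFinM lee_wpmul2l ?e_bnd //.
  by rewrite lee_fin fine_ge0 // Lnorm_ge0.
apply/cvgrPdist_le => eps eps0; apply/nbhs_normP.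
exists (eps / (K + 1)); first by rewrite /= divr_gt0 // ltr_wpDl.
move=> u /= /ltW; rewrite ler_pdivlMr ?ltr_wpDl // => vu.
have -> : ipZ mu a (e v) = ipZ mu a (e (v - u)) + ipZ mu a (e u).
  by rewrite -[ipZ _ _ (e (v - u))]mul1r -lin scale1r subrK.
rewrite addrK (le_trans (bnd _)) //.
have := normr_ge0 (v - u); nra.
Qed.

End ae_linear_embedding.

Lemma penalty_gt0 (R : numDomainType) (rho : nat -> R) (gamma : R) :
  0 < rho 0%N -> 0 < gamma ->
  (forall k, rho k.+1 = rho k \/ rho k.+1 = gamma * rho k) -> forall k, 0 < rho k.
Proof. by move=> rho0 gamma0 upd; elim=> // k IH; case: (upd k) => ->; rewrite ?mulr_gt0. Qed.

Lemma subseq_shiftS (U : ptopologicalType) (x : nat -> U) (l : U) (phi : nat -> nat) :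
  (forall n, (phi n < phi n.+1)%N) -> (x \o phi) @ \oo --> l ->
  exists2 j : nat -> nat, (forall k, (k <= j k)%N) & (fun k => x (j k).+1) @ \oo --> l.
Proof.
move=> phiS xl.
have phi_ge n : (n <= phi n)%N by elim: n => // n IH; exact: leq_ltn_trans IH (phiS n).
have phiS_gt0 k : (0 < phi k.+1)%N by exact: leq_ltn_trans (leq0n _) (phiS k).
exists (fun k => (phi k.+1).-1); first by move=> k; rewrite -ltnS prednK.
under eq_fun => k do rewrite prednK //.
by move: xl; rewrite -(cvg_shiftS (x \o phi)).
Qed.

Lemma near_comp_ge (P : nat -> Prop) (j : nat -> nat) : (forall k, (k <= j k)%N) ->
  (\forall n \near \oo, P n) -> \forall k \near \oo, P (j k).
Proof. by move=> jk [N _ PN]; exists N => // k /= Nk; apply/PN/(leq_trans Nk). Qed.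

Lemma dual_cvg0_comp (R : realType) (V : normedModType R) (phi : nat -> V -> R)
    (j : nat -> nat) :
  (forall k, (k <= j k)%N) -> dual_cvg0 phi -> dual_cvg0 (fun k => phi (j k)).
Proof. by move=> jk phi0 eps /phi0; exact: near_comp_ge. Qed.

Lemma cvgy_comp_ge (R : realType) (r : nat -> R) (j : nat -> nat) :
  (forall k, (k <= j k)%N) -> r @ \oo --> +oo -> (r \o j) @ \oo --> +oo.
Proof. by move=> jk /cvgryPge ry; apply/cvgryPge => A; exact: near_comp_ge (ry A). Qed.

Lemma cvg0_le_invr (R : realType) (u r : nat -> R) (K : R) :
  (forall k, 0 <= u k <= (r k)^-1 * K) -> r @ \oo --> +oo -> u @ \oo --> 0.
Proof.
move=> bnd /cvgryPge ry; apply/cvgr0Pnorm_le => eps eps0.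
near=> k.
have r0 : 0 < r k by apply: lt_le_trans ltr01 _; near: k; exact: ry.
have Kr : K / eps <= r k by near: k; exact: ry.
have /andP[u0 uK] := bnd k.
rewrite ger0_norm // (le_trans uK) // ler_pdivrMl //.
by rewrite ler_pdivrMr in Kr.
Unshelve. all: by end_near.
Qed.

Theorem theorem6p4
  (R : realType) (X Y : completeNormedModType R)
  (d : measure_display) (T : measurableType d) (mu : {measure set T -> \bar R})
  (* the dense continuous linear embedding e : Y -> Z = L^2(mu) *)
  (e : Y -> T -> R)
  (e_L2 : forall y, L2 mu (e y))
  (e_lin : forall (a : R) (y1 y2 : Y),
      {ae mu, forall t, e (a *: y1 + y2) t = a * e y1 t + e y2 t})
  (e_cont : exists2 C : R, 0 <= C & forall y, (nrm2 mu (e y) <= (C * `|y|)%:E)%E)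
  (e_inj : forall y, {ae mu, forall t, e y t = 0} -> y = 0)
  (e_dense : forall z, L2 mu z -> forall eps : R, 0 < eps ->
      exists y, (nrm2 mu (fun t => (e y t - z t)%R) < eps%:E)%E)
  (* f and g continuously Frechet differentiable *)
  (f : X -> R^o) (g : X -> Y) (hf : C1_map f) (hg : C1_map g)
  (* y |-> |y| well-defined and continuous on Y *)
  (absY : Y -> Y) (habs : forall y, {ae mu, forall t, e (absY y) t = `|e y t|})
  (habsc : continuous absY)
  (* the algorithm data *)
  (x : nat -> X) (lam : nat -> T -> R) (rho : nat -> R) (w : nat -> T -> R)
  (wmax : T -> R) (gamma tau : R)
  (S0_lam : L2 mu (lam 0%N)) (S0_rho : 0 < rho 0%N)
  (S0_wmax : L2 mu wmax) (S0_wmax0 : {ae mu, forall t, 0 <= wmax t})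
  (S0_gamma : 1 < gamma) (S0_tau : 0 < tau < 1)
  (S2_w : forall k, L2 mu (w k) /\ {ae mu, forall t, 0 <= w k t <= wmax t})
  (S2_x : dual_cvg0 (fun k (h : X) =>
      'd f (x k.+1) h +
      ipZ mu (pos_part (fun t => w k t + rho k * e (g (x k.+1)) t))
             (e ('d g (x k.+1) h))))
  (S3_lam : forall k, lam k.+1 = pos_part (fun t => w k t + rho k * e (g (x k.+1)) t))
  (S3_rho : forall k,
      let V := fun j => nrm2 mu (fun t => Num.min (- e (g (x j.+1)) t) (w j t / rho j)) in
      ((k = 0%N \/ (V k <= tau%:E * V k.-1)%E) -> rho k.+1 = rho k) /\
      (~ (k = 0%N \/ (V k <= tau%:E * V k.-1)%E) -> rho k.+1 = gamma * rho k))
  (rho_infty : rho @ \oo --> +oo) :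
  forall xbar : X,
    (exists phi : nat -> nat, (forall n, (phi n < phi n.+1)%N) /\ (x \o phi) @ \oo --> xbar) ->
    {ae mu, forall t, e (g xbar) t <= 0} ->
    exists (y : nat -> X) (m : nat -> Y -> R),
      y @ \oo --> xbar /\
      (forall k, dual_elt (m k)) /\
      (forall k v, {ae mu, forall t, 0 <= e v t} -> 0 <= m k v) /\
      dual_cvg0 (fun k (h : X) => 'd f (y k) h + m k ('d g (y k) h)) /\
      (fun k => m k (2^-1 *: (absY (g (y k)) - g (y k)))) @ \oo --> 0.
Proof.
move=> xbar [phi [phiS x_phi]] _.
have rho_gt0 : forall k, 0 < rho k.
  apply: (penalty_gt0 S0_rho (lt_trans ltr01 S0_gamma)) => k.
  have [keep scale] := S3_rho k; set P := (_ \/ _) in keep scale.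
  by have [/keep|/scale] := EM P; [left|right].
have [j jk x_j] := subseq_shiftS phiS x_phi.
pose lam_j k := pos_part (fun t => w (j k) t + rho (j k) * e (g (x (j k).+1)) t).
have lam_jL2 k : L2 mu (lam_j k) by exact/L2_pos_part/L2D/L2Z/e_L2/(S2_w _).1.
exists (fun k => x (j k).+1), (fun k v => ipZ mu (lam_j k) (e v)).
split; first exact: x_j.
split; first by move=> k; apply: (embed_dual_elt e_L2 e_lin e_cont (lam_jL2 k)).
split; first by move=> k v; apply: ipZ_ge0_ae (lam_jL2 k) (e_L2 v) => t; exact: pos_part_ge0.
split; first exact: dual_cvg0_comp jk S2_x.
apply: (cvg0_le_invr (K := ipZ mu wmax wmax) _ (cvgy_comp_ge jk rho_infty)) => k.
rewrite (ipZ_ae_eqr (lam_jL2 k) (e_L2 _) _ (embed_half_abs_sub e_lin (habs _))).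
  exact: ipZ_pos_part_compl_le (rho_gt0 _) (S2_w _).1 S0_wmax (e_L2 _) (S2_w _).2.
exact: L2_pos_part (L2N (e_L2 _)).
Qed.
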